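(* Let $L$ be a BZ--lattice whose $0$ is meet--irreducible (equivalently, whose $1$ is join--irreducible). Then $L$ is an antiortholattice, i.e. $\{a\in L: a\wedge a'=0\}=\{0,1\}$ and the Brouwer complement of $L$ is the trivial one ($0^\sim=1$ and $a^\sim=0$ for all $a\in L\setminus\{0\}$). In particular, every BZ--lattice whose lattice reduct is a chain is an antiortholattice.
   Context: A pseudo--Kleene algebra is a bounded lattice with a unary operation $'$ satisfying $a''=a$, $a\leq b\Rightarrow b'\leq a'$, and $a\wedge a'\leq b\vee b'$ for all $a,b$. A BZ--lattice is an algebra $(L,\vee,\wedge,',{}^\sim,0,1)$ where $(L,\vee,\wedge,',0,1)$ is a pseudo--Kleene algebra and ${}^\sim$ (the Brouwer complement) satisfies, for all $a,b$: $a\wedge a^\sim=0$, $a\leq a^{\sim\sim}$, $a^{\sim\prime}=a^{\sim\sim}$, and $a\leq b\Rightarrow b^\sim\leq a^\sim$. ''$0$ meet--irreducible'' means $a\wedge b=0$ implies $a=0$ or $b=0$. An antiortholattice is a pseudo--Kleene algebra with $\{a: a\wedge a'=0\}=\{0,1\}$, equipped with the trivial Brouwer complement. *)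

From HB Require Import structures.
From mathcomp Require Import all_boot all_order.
Set Implicit Arguments. Unset Strict Implicit. Unset Printing Implicit Defensive.
Import Order.TTheory.
Local Open Scope order_scope.

(* Pseudo-Kleene algebra on a bounded lattice L with unary operation c = ' *)
Definition pseudo_kleene (d : Order.disp_t) (L : tbLatticeType d) (c : L -> L) : Prop :=
  [/\ (forall a, c (c a) = a),
      (forall a b, a <= b -> c b <= c a) &
      (forall a b, a `&` c a <= b `|` c b)].

(* BZ-lattice: pseudo-Kleene algebra with a Brouwer complement bz = ~ *)
Definition BZ_lattice (d : Order.disp_t) (L : tbLatticeType d) (c bz : L -> L) : Prop :=
  [/\ pseudo_kleene c,
      (forall a, a `&` bz a = \bot),
      (forall a, a <= bz (bz a)),
      (forall a, c (bz a) = bz (bz a)) &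
      (forall a b, a <= b -> bz b <= bz a)].

Definition zero_meet_irreducible (d : Order.disp_t) (L : tbLatticeType d) : Prop :=
  forall a b : L, a `&` b = \bot -> a = \bot \/ b = \bot.

Definition antiortholattice (d : Order.disp_t) (L : tbLatticeType d) (c bz : L -> L) : Prop :=
  [/\ pseudo_kleene c,
      (forall a : L, a `&` c a = \bot <-> (a = \bot \/ a = \top)),
      bz \bot = \top &
      (forall a : L, a <> \bot -> bz a = \bot)].

Definition is_chain (d : Order.disp_t) (L : tbLatticeType d) : Prop :=
  forall a b : L, a <= b \/ b <= a.

From HB Require Import structures.
From mathcomp Require Import all_boot all_order.
Set Implicit Arguments. Unset Strict Implicit. Unset Printing Implicit Defensive.
Import Order.TTheory.
Local Open Scope order_scope.

(* In every BZ-lattice 1~ = 1 ∧ 1~ = 0, hence 0~ ≥ 1~~ ≥ 1. If 0 is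
   meet-irreducible, the identity a ∧ a~ = 0 forces a~ = 0 for a ≠ 0, and
   a ∧ a' = 0 forces a = 0 or a' = 0, i.e. a = 1. In a chain, a ∧ b is a or b,
   so 0 is meet-irreducible. *)

Section PseudoKleene.

Variables (d : Order.disp_t) (L : tbLatticeType d) (c : L -> L).
Hypothesis pkL : pseudo_kleene c.

Lemma pk_compl_bot : c \bot = \top.
Proof.
case: pkL => cK c_anti _; apply/eqP; rewrite eq_le lex1 /=.
by rewrite -{1}(cK \top); apply: c_anti; rewrite le0x.
Qed.

Lemma pk_compl_top : c \top = \bot.
Proof. by case: pkL => cK _ _; rewrite -pk_compl_bot cK. Qed.

Lemma pk_meet_compl_eq0 :
  zero_meet_irreducible L ->
  forall a, a `&` c a = \bot <-> a = \bot \/ a = \top.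
Proof.
case: pkL => cK _ _ zi a; split.
- by case/zi=> [|ca0]; [left | right; rewrite -(cK a) ca0 pk_compl_bot].
- by case=> ->; rewrite ?meet0x // pk_compl_top meetx0.
Qed.

End PseudoKleene.

Section BZLattice.

Variables (d : Order.disp_t) (L : tbLatticeType d) (c bz : L -> L).
Hypothesis bzL : BZ_lattice c bz.

Lemma bz_top : bz \top = \bot.
Proof. by case: bzL => _ bz_meet _ _ _; rewrite -(bz_meet \top) meet1x. Qed.

Lemma bz_bot : bz \bot = \top.
Proof.
case: bzL => _ _ bzbz _ _; apply/eqP; rewrite eq_le lex1 /=.
by rewrite -bz_top bzbz.
Qed.

Lemma bz_eq0 :
  zero_meet_irreducible L -> forall a, a <> \bot -> bz a = \bot.
Proof. by case: bzL => _ bz_meet _ _ _ zi a a0; case: (zi _ _ (bz_meet a)). Qed.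

End BZLattice.

Lemma chain_zero_meet_irreducible (d : Order.disp_t) (L : tbLatticeType d) :
  is_chain L -> zero_meet_irreducible L.
Proof.
move=> chL a b; case: (chL a b) => [/meet_idPl -> | /meet_idPr ->] ab0;
  by [left | right].
Qed.

Lemma BZ_zero_meet_irreducible_antiortholattice
    (d : Order.disp_t) (L : tbLatticeType d) (c bz : L -> L) :
  BZ_lattice c bz -> zero_meet_irreducible L -> antiortholattice c bz.
Proof.
move=> bzL zi; have [pkL _ _ _ _] := bzL.
split=> //.
- exact: pk_meet_compl_eq0 pkL zi.
- exact: bz_bot bzL.
- exact: bz_eq0 bzL zi.
Qed.

Theorem lemma3p3 :
  (forall (d : Order.disp_t) (L : tbLatticeType d) (c bz : L -> L),
      BZ_lattice c bz -> zero_meet_irreducible L -> antiortholattice c bz) /\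
  (forall (d : Order.disp_t) (L : tbLatticeType d) (c bz : L -> L),
      BZ_lattice c bz -> is_chain L -> antiortholattice c bz).
Proof.
split; first exact: BZ_zero_meet_irreducible_antiortholattice.
move=> d L c bz bzL /chain_zero_meet_irreducible.
exact: BZ_zero_meet_irreducible_antiortholattice.
Qed.
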